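(* Let $\mathcal{A}$ be a complex Banach algebra with unity, $a,b\in\mathcal{A}$ and $k$ a positive integer. Suppose $ab\alpha_{1}\alpha_{2}\cdots\alpha_{k}=0$ for all $\alpha_{1},\dots,\alpha_{k}\in\{a,b\}$. Then $a,b\in\mathcal{A}^{qnil}$ if and only if $a+b\in\mathcal{A}^{qnil}$.
   Context: $\mathcal{A}^{qnil}$ denotes the set of quasinilpotent elements of $\mathcal{A}$, i.e. elements whose spectrum is $\{0\}$. *)

From HB Require Import structures.
From mathcomp Require Import all_boot all_order all_algebra.
From mathcomp Require Import all_classical all_reals all_analysis.
From mathcomp Require Import complex.
Set Implicit Arguments. Unset Strict Implicit. Unset Printing Implicit Defensive.
Import Order.TTheory GRing.Theory Num.Theory.
Import numFieldNormedType.Exports.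
Local Open Scope classical_set_scope.
Local Open Scope ring_scope.

(* Hierarchy-Builder cannot join the ring hierarchy with the normed-module
   hierarchy (Num.NumDomain already inherits both without a join), so a unital
   Banach algebra over K is presented as a complete normed K-module A (Banach
   space) together with a multiplication [mul] and a unit [one] satisfying the
   axioms of a unital associative K-algebra, a submultiplicative norm and
   ||1|| = 1. *)
Record banach_algebra (K : numFieldType) (A : completeNormedModType K)
    (mul : A -> A -> A) (one : A) : Prop := BanachAlgebra {
  ba_mulA : associative mul ;
  ba_mul1l : left_id one mul ;
  ba_mul1r : right_id one mul ;
  ba_mulDl : left_distributive mul +%R ;
  ba_mulDr : right_distributive mul +%R ;
  ba_mulZl : forall (l : K) (x y : A), mul (l *: x) y = l *: mul x y ;
  ba_mulZr : forall (l : K) (x y : A), mul x (l *: y) = l *: mul x y ;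
  ba_normM : forall x y : A, `|mul x y| <= `|x| * `|y| ;
  ba_norm1 : `|one| = 1
}.

Definition invertible (K : numFieldType) (A : completeNormedModType K)
    (mul : A -> A -> A) (one : A) (x : A) : Prop :=
  exists y : A, mul x y = one /\ mul y x = one.

Definition spectrum (K : numFieldType) (A : completeNormedModType K)
    (mul : A -> A -> A) (one : A) (a : A) : set K :=
  [set l : K | ~ invertible mul one (a - l *: one)].

Definition qnil (K : numFieldType) (A : completeNormedModType K)
    (mul : A -> A -> A) (one : A) (a : A) : Prop :=
  spectrum mul one a = [set 0].

(* Write l for a nonzero scalar.  From (a - l)(b - l) = ab - l(a + b - l) one gets
   a + b - l = -l^-1 (1 - ab P)(a - l)(b - l) with P = ((a - l)(b - l))^-1, and
   (a - l)(b - l) = -l (1 - ab P')(a + b - l) with P' = l^-1 (a + b - l)^-1.  In both cases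
   (ab P)^(k+1) = 0: left multiplication by a or b lengthens the words w for which
   ab w x = 0 is known, the resolvents of a, b and a + b do not shorten them, so the
   hypothesis on words of length k applies.  Hence 1 - ab P is invertible, and
   invertibility passes from a - l and b - l to a + b - l, and from a + b - l to
   (a - l)(b - l).  The latter only gives a right inverse of a - l; a - l is then
   invertible by a perturbation argument along the ray t l, t >= 1, which ends in the
   region |t l| > ||a|| where right inverses are two-sided, and b - l follows.
   Quasinilpotency also requires 0 in the spectrum, i.e. nonempty spectra.  If x - l
   were invertible for all l, the norm of its inverse would be continuous, would tend
   to 0 at infinity and would attain a maximum M; averaging the resolvent over n-th
   roots of unity on the circle of radius 1/(2M) around a maximum point shows that
   the maximum is attained again one radius to the right, hence arbitrarily far away. *)

From HB Require Import structures.
From mathcomp Require Import all_boot all_order all_algebra.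
From mathcomp Require Import all_classical all_reals all_analysis.
From mathcomp Require Import complex cyclic separable cyclotomic.
From mathcomp Require Import ring lra zify.
Import Order.TTheory GRing.Theory Num.Theory.
Import numFieldNormedType.Exports.
Import Normc.
Set Implicit Arguments. Unset Strict Implicit. Unset Printing Implicit Defensive.
Local Open Scope ring_scope.
Local Open Scope complex_scope.

Section ComplexModulus.
Variable R : rcfType.
Implicit Types (l : R[i]) (t : R).

Lemma normcE l : `|l| = (normc l)%:C.
Proof. by case: l. Qed.

Lemma normc_ge0 l : 0 <= normc l.
Proof. by case: l => u v; exact: sqrtr_ge0. Qed.

Lemma normc_real t : normc t%:C = `|t|.
Proof. by rewrite /= expr0n addr0 sqrtr_sqr. Qed.

Lemma normc_natr n : normc (n%:R : R[i]) = n%:R.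
Proof. by rewrite -(rmorph_nat (real_complex R)) normc_real ger0_norm. Qed.

Lemma normc_ge_Re l : `|complex.Re l| <= normc l.
Proof. by case: l => u v; rewrite /= -sqrtr_sqr ler_wsqrtr // lerDl sqr_ge0. Qed.

Lemma normc_ge_Im l : `|complex.Im l| <= normc l.
Proof. by case: l => u v; rewrite /= -sqrtr_sqr ler_wsqrtr // lerDr sqr_ge0. Qed.

Lemma normc_le_Re_Im l : normc l <= `|complex.Re l| + `|complex.Im l|.
Proof.
case: l => u v /=.
have -> : `|u| + `|v| = Num.sqrt ((`|u| + `|v|) ^+ 2).
  by rewrite sqrtr_sqr [RHS]ger0_norm //; apply: addr_ge0.
apply: ler_wsqrtr.
rewrite sqrrD -[u ^+ 2]real_normK ?num_real // -[v ^+ 2]real_normK ?num_real //.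
by rewrite -addrA lerD2l lerDr mulrn_wge0 // mulr_ge0.
Qed.

End ComplexModulus.

Lemma prim_root_exists (C : numClosedFieldType) n :
  (0 < n)%N -> exists z : C, n.-primitive_root z.
Proof.
pose p : {poly C} := 'X^n - 1; have [r Dp] := closed_field_poly_normal p.
move=> n_gt0; rewrite (monicP _) ?monicXnsubC // scale1r in Dp.
have rn1 : all n.-unity_root r by apply/allP=> z; rewrite -root_prod_XsubC -Dp.
have sz_r : (n < (size r).+1)%N.
  by rewrite -(size_prod_XsubC r id) -Dp size_XnsubC.
have [|z] := hasP (has_prim_root n_gt0 rn1 _ sz_r); last by exists z.
by rewrite -separable_prod_XsubC -Dp separable_Xn_sub_1 // pnatr_eq0 -lt0n.
Qed.

Lemma sum_prim_root_expr (F : fieldType) n (z : F) p :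
  n.-primitive_root z -> (0 < p < n)%N -> \sum_(k < n) (z ^+ p) ^+ k = 0.
Proof.
move=> zn /andP[p_gt0 p_lt_n].
have zp1 : z ^+ p != 1 by rewrite -(prim_order_dvd zn) gtnNdvd.
have : (z ^+ p - 1) * \sum_(k < n) (z ^+ p) ^+ k = 0.
  by rewrite -subrX1 -exprM mulnC exprM (prim_expr_order zn) expr1n subrr.
by move/eqP; rewrite mulf_eq0 subr_eq0 (negPf zp1) => /eqP.
Qed.

Lemma leq_sqrn_exp2 n : (4 <= n)%N -> (n ^ 2 <= 2 ^ n)%N.
Proof.
elim: n => [//|n IHn] n_ge4; have [n_ge4'|n_lt4] := leqP 4 n; last first.
  by have -> : n = 3 by lia.
rewrite [(2 ^ n.+1)%N]expnS; apply: (@leq_trans (2 * n ^ 2)); first nia.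
by rewrite leq_mul2l IHn.
Qed.

Section UnitAlgebra.
Variables (K : fieldType) (B : unitAlgType K).
Implicit Types (x y : B) (l : K).

Definition spectrum_sub0 x : Prop := forall l, l != 0 -> x - l%:A \is a GRing.unit.

Lemma unitr_1sub_nilpotent x N : x ^+ N = 0 -> 1 - x \is a GRing.unit.
Proof.
move=> xN0; apply/unitrP; exists (\sum_(i < N) x ^+ i).
have geom : (1 - x) * \sum_(i < N) x ^+ i = 1.
  by rewrite -opprB mulNr -subrX1 xN0 sub0r opprK.
suff <- : GRing.comm (1 - x) (\sum_(i < N) x ^+ i) by [].
apply/commr_sym/commrB; first exact: commr1.
by apply/commr_sym/commr_sum => i _; exact/commrX/commr_refl.
Qed.

Lemma mulr_subA (a b : B) l :
  (a - l%:A) * (b - l%:A) = a * b - l *: (a + b - l%:A).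
Proof.
rewrite mulrBl !mulrBr mulr_algl mulr_algr mulr_algl !scalerBr !scalerDr.
by rewrite -addrA -opprD addrA.
Qed.

Lemma resolvent_expansion (Z w : B) l : Z = w + l *: (Z * w) ->
  forall N, Z = \sum_(p < N) l ^+ p *: w ^+ p.+1 + l ^+ N *: (Z * w ^+ N).
Proof.
move=> Zw; elim=> [|N IHN]; first by rewrite big_ord0 add0r expr0 scale1r mulr1.
rewrite {1}IHN {1}Zw mulrDl -scalerAl -mulrA -!exprS scalerDr scalerA -exprSr.
by rewrite big_ord_recr /= addrA.
Qed.

Section WordAnnihilator.
Variables (a b : B) (k : nat).
Hypothesis ab_words0 : forall al : 'I_k -> B,
  (forall i, al i = a \/ al i = b) -> a * b * \prod_(i < k) al i = 0.

Lemma ab_word0 w : all (mem [:: a; b]) w -> size w = k ->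
  a * b * \prod_(z <- w) z = 0.
Proof.
move=> wab wk; rewrite (big_nth 0) wk big_mkord; apply: ab_words0 => i.
have := all_nthP 0 wab i; rewrite wk => /(_ (ltn_ord i)).
by rewrite !inE => /orP[] /eqP ->; [left|right].
Qed.

Definition ab_ann j x : Prop := forall w, all (mem [:: a; b]) w ->
  (k <= size w + j)%N -> a * b * (\prod_(z <- w) z * x) = 0.

Lemma ab_ann0 x : ab_ann 0 x.
Proof.
move=> w wab; rewrite addn0 => k_le_w.
have wab' : all (mem [:: a; b]) (take k w ++ drop k w) by rewrite cat_take_drop.
rewrite -(cat_take_drop k w) big_cat -mulrA !mulrA ab_word0 ?mul0r //.
  by move: wab'; rewrite all_cat => /andP[].
by rewrite size_takel.
Qed.

Lemma ab_annW i j x : (i <= j)%N -> ab_ann j x -> ab_ann i x.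
Proof. by move=> ij xj w wab kw; apply: xj => //; rewrite (leq_trans kw) ?leq_add2l. Qed.

Lemma ab_annB j x y : ab_ann j x -> ab_ann j y -> ab_ann j (x - y).
Proof. by move=> xj yj w wab kw; rewrite !mulrBr xj ?yj ?subr0. Qed.

Lemma ab_annZ j l x : ab_ann j x -> ab_ann j (l *: x).
Proof. by move=> xj w wab kw; rewrite -!scalerAr xj ?scaler0. Qed.

Lemma ab_ann_mull z : z \in [:: a; b] -> forall j x, ab_ann j x -> ab_ann j.+1 (z * x).
Proof.
move=> zab j x xj w wab kw.
have -> : \prod_(y <- w) y * (z * x) = \prod_(y <- rcons w z) y * x.
  by rewrite big_rcons mulrA.
by apply: xj; [rewrite all_rcons wab andbT | rewrite size_rcons addSn -addnS].
Qed.

Lemma ab_ann_addl j x : ab_ann j x -> ab_ann j.+1 ((a + b) * x).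
Proof.
move=> xj w wab kw; rewrite mulrDl !mulrDr.
by rewrite (ab_ann_mull (mem_head a _) xj) ?(ab_ann_mull _ xj) ?addr0 // !inE eqxx orbT.
Qed.

Lemma ab_ann_top x : ab_ann k x -> a * b * x = 0.
Proof. by move=> xk; have := xk [::] isT; rewrite big_nil mul1r add0n; apply. Qed.

Lemma ab_ann_resolvent c l : l != 0 ->
  (forall j x, ab_ann j x -> ab_ann j.+1 (c * x)) -> c - l%:A \is a GRing.unit ->
  forall j x, ab_ann j x -> ab_ann j ((c - l%:A)^-1 * x).
Proof.
move=> l0 c_up cl_unit j x xj; set g := (c - l%:A)^-1.
have gxE : g * x = l^-1 *: (c * (g * x) - x).
  have e : (c - l%:A) * (g * x) = x by rewrite mulrA divrr // mul1r.
  by rewrite -[X in _ - X]e mulrBl mulr_algl opprB addrC subrK scalerA mulVf ?scale1r.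
suff : forall i, (i <= j)%N -> ab_ann i (g * x) by apply.
elim=> [|i IHi] ij; first exact: ab_ann0.
by rewrite gxE; apply/ab_annZ/ab_annB; [apply/c_up/IHi/ltnW | apply: ab_annW xj].
Qed.

Lemma unitr_1sub_abP P : (forall j x, ab_ann j x -> ab_ann j (P * x)) ->
  1 - a * b * P \is a GRing.unit.
Proof.
move=> P_ann; apply: (@unitr_1sub_nilpotent _ k.+1).
have pow_ann m : ab_ann m.*2 ((a * b * P) ^+ m).
  elim: m => [|m IHm]; first exact: ab_ann0.
  rewrite exprS -2!mulrA doubleS; apply: (ab_ann_mull (mem_head a _)).
  by apply: ab_ann_mull; rewrite ?inE ?eqxx ?orbT //; exact: P_ann.
rewrite exprS -mulrA; apply/ab_ann_top/P_ann/(ab_annW _ (pow_ann k)).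
by rewrite -addnn leq_addr.
Qed.

Lemma addr_subA_unit l : l != 0 ->
  a - l%:A \is a GRing.unit -> b - l%:A \is a GRing.unit ->
  a + b - l%:A \is a GRing.unit.
Proof.
move=> l0 ua ub; set M := (a - l%:A) * (b - l%:A).
have uM : M \is a GRing.unit by rewrite unitrMl.
have M_ann j x : ab_ann j x -> ab_ann j (M^-1 * x).
  move=> xj; rewrite invrM // -mulrA.
  apply: (ab_ann_resolvent l0 _ ub); first exact/ab_ann_mull/mem_behead/mem_head.
  exact: (ab_ann_resolvent l0 (ab_ann_mull (mem_head a _)) ua).
have -> : a + b - l%:A = (- l^-1) *: ((1 - a * b * M^-1) * M).
  rewrite mulrBl mul1r mulrVK // /M mulr_subA [_ - a * b]addrC addKr.
  by rewrite scaleNr scalerN opprK scalerA mulVf ?scale1r.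
by rewrite scaler_unit ?unitfE ?oppr_eq0 ?invr_eq0 // unitrMl // unitr_1sub_abP.
Qed.

Lemma mulr_subA_unit l : l != 0 -> a + b - l%:A \is a GRing.unit ->
  (a - l%:A) * (b - l%:A) \is a GRing.unit.
Proof.
move=> l0 us; set S := a + b - l%:A in us *.
have P_ann j x : ab_ann j x -> ab_ann j ((l^-1 *: S^-1) * x).
  by move=> xj; rewrite -scalerAl; apply/ab_annZ/(ab_ann_resolvent l0 (@ab_ann_addl) us).
have -> : (a - l%:A) * (b - l%:A) = (- l) *: ((1 - a * b * (l^-1 *: S^-1)) * S).
  rewrite mulr_subA -/S; clearbody S.
  rewrite mulrBl mul1r -scalerAr -scalerAl mulrVK // scalerBr scalerA.
  by rewrite mulNr mulfV // scaleN1r opprK scaleNr addrC.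
by rewrite scaler_unit ?unitfE ?oppr_eq0 // unitrMl // unitr_1sub_abP.
Qed.

Lemma spectrum_sub0D :
  spectrum_sub0 a -> spectrum_sub0 b -> spectrum_sub0 (a + b).
Proof. by move=> sa sb l l0; apply: addr_subA_unit; [|apply: sa|apply: sb]. Qed.

End WordAnnihilator.

End UnitAlgebra.

Section NormedAlgebra.
Variables (R : realType) (B : unitAlgType R[i]) (nrm : B -> R).
Hypotheses (nrm_eq0 : forall x, nrm x = 0 -> x = 0)
  (nrmD : forall x y, nrm (x + y) <= nrm x + nrm y)
  (nrmZ : forall (l : R[i]) x, nrm (l *: x) = normc l * nrm x)
  (nrmM : forall x y, nrm (x * y) <= nrm x * nrm y)
  (nrm1 : nrm 1 = 1).
Implicit Types (x y z : B) (l m : R[i]).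

Lemma nrm0 : nrm 0 = 0.
Proof. by have := nrmZ 0 0; rewrite scale0r normc0 mul0r. Qed.

Lemma nrmN x : nrm (- x) = nrm x.
Proof. by rewrite -scaleN1r nrmZ normcN normc1 mul1r. Qed.

Lemma nrm_ge0 x : 0 <= nrm x.
Proof. by have := nrmD x (- x); rewrite subrr nrm0 nrmN; lra. Qed.

Lemma nrm_alg l : nrm l%:A = normc l.
Proof. by rewrite nrmZ nrm1 mulr1. Qed.

Lemma nrm_inv_gt0 x : x \is a GRing.unit -> 0 < nrm x^-1.
Proof.
move=> ux; rewrite lt_def nrm_ge0 andbT; apply/eqP => /nrm_eq0 x'0.
by have := mulVr ux; rewrite x'0 mul0r => /eqP; rewrite eq_sym oner_eq0.
Qed.

Lemma nrm_dist x y : `|nrm x - nrm y| <= nrm (x - y).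
Proof.
have := nrmD (x - y) y; have := nrmD (y - x) x.
by rewrite !subrK -opprB nrmN ler_norml => *; apply/andP; split; lra.
Qed.

Lemma nrm_sum (I : Type) (r : seq I) (P : pred I) (F : I -> B) :
  nrm (\sum_(i <- r | P i) F i) <= \sum_(i <- r | P i) nrm (F i).
Proof.
elim/big_rec2: _ => [|i s t _ IH]; first by rewrite nrm0.
by apply: le_trans (nrmD _ _) _; rewrite lerD2l.
Qed.

Lemma nrmX x n : nrm (x ^+ n) <= nrm x ^+ n.
Proof.
elim: n => [|n IHn]; first by rewrite nrm1.
by rewrite !exprS; apply: le_trans (nrmM _ _) _; apply: (ler_wpM2l (nrm_ge0 _)).
Qed.

Lemma nrm_subA_sub x l m : nrm ((x - l%:A) - (x - m%:A)) = normc (m - l).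
Proof. by rewrite opprB addrC addrA subrK -scalerBl nrm_alg. Qed.

Lemma unit_of_rinv_near x r y L : x * r = 1 -> L * y = 1 ->
  nrm L * nrm (y - x) < 1 -> x \is a GRing.unit.
Proof.
move=> xr Ly; set c := nrm L * nrm (y - x) => c_lt1; set f := 1 - r * x.
have xf0 : x * f = 0 by rewrite mulrBr mulr1 mulrA xr mul1r subrr.
have fE : f = L * ((y - x) * f) by rewrite mulrBl xf0 subr0 mulrA Ly mul1r.
have f_le : nrm (L * ((y - x) * f)) <= c * nrm f.
  rewrite /c -mulrA; apply: le_trans (nrmM _ _) _.
  exact: (ler_wpM2l (nrm_ge0 _)) (nrmM _ _).
rewrite -fE in f_le; have := nrm_ge0 f => f_ge0; have /nrm_eq0/subr0_eq rx1 : nrm f = 0 by nra.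
by apply/unitrP; exists r.
Qed.

Lemma unit_of_rinv_near_bound x r y L : x * r = 1 -> L * y = 1 ->
  nrm r * nrm (y - x) <= 1 / 4 -> x \is a GRing.unit.
Proof.
move=> xr Ly small; apply: (unit_of_rinv_near xr Ly).
have LE : L = r - L * (y - x) * r.
  by rewrite mulrBr mulrBl Ly mul1r -mulrA xr mulr1 opprB addrC subrK.
have : nrm L <= nrm r + nrm L * nrm (y - x) * nrm r.
  rewrite {1}LE; apply: le_trans (nrmD _ _) _; rewrite lerD2l nrmN.
  by apply: le_trans (nrmM _ _) _; exact: (ler_wpM2r (nrm_ge0 _)) (nrmM _ _).
have := nrm_ge0 L; have := nrm_ge0 r; have := nrm_ge0 (y - x); nra.
Qed.

Lemma unit_of_rinv_large x r l : (x - l%:A) * r = 1 -> nrm x < normc l ->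
  x - l%:A \is a GRing.unit.
Proof.
move=> xr x_lt; have l0 : l != 0.
  by apply: contraTneq x_lt => ->; rewrite normc0 -leNgt nrm_ge0.
apply: (unit_of_rinv_near (L := - l^-1%:A) (y := - l%:A) xr).
  by rewrite mulrNN mulr_algl scalerA mulVf ?scale1r.
rewrite opprB addKr !nrmN nrm_alg normcV.
by rewrite mulrC ltr_pdivrMr ?mul1r // (le_lt_trans (nrm_ge0 x)).
Qed.

Lemma unit_subA_near x l m r : (x - l%:A) * r = 1 -> x - m%:A \is a GRing.unit ->
  nrm (x - m%:A)^-1 * normc (l - m) < 1 -> x - l%:A \is a GRing.unit.
Proof. by move=> xr um; rewrite -(nrm_subA_sub x); exact: unit_of_rinv_near xr (mulVr um). Qed.

Lemma unit_subA_near_bound x l m r : (x - l%:A) * r = 1 -> x - m%:A \is a GRing.unit ->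
  nrm r * normc (l - m) <= 1 / 4 -> x - l%:A \is a GRing.unit.
Proof.
by move=> xr um; rewrite -(nrm_subA_sub x); exact: unit_of_rinv_near_bound xr (mulVr um).
Qed.

Lemma spectrum_sub0_of_rinv x :
  (forall l, l != 0 -> exists r, (x - l%:A) * r = 1) -> spectrum_sub0 x.
Proof.
move=> rinv l l0; apply/negPn/negP => l_sing; pose tl (t : R) := t%:C * l.
have nl_gt0 : 0 < normc l.
  by rewrite lt_def normc_ge0 andbT; apply: contra l0 => /eqP/eq0_normc ->.
have tl_rinv t : 1 <= t -> exists r, (x - (tl t)%:A) * r = 1.
  by move=> t_ge1; apply: rinv; rewrite mulf_neq0 // fmorph_eq0; apply: lt0r_neq0; lra.
have normc_tl s t : normc (tl s - tl t) = `|s - t| * normc l.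
  by rewrite -mulrBl -rmorphB normcM normc_real.
pose E := [set t : R | 1 <= t /\ x - (tl t)%:A \isn't a GRing.unit]%classic.
have E_ub t : E t -> t <= nrm x / normc l.
  move=> [t_ge1]; apply: contraR; rewrite -ltNge => t_big.
  have [r tr] := tl_rinv t t_ge1; apply: unit_of_rinv_large tr _.
  by rewrite normcM normc_real ger0_norm -?ltr_pdivrMr //; lra.
have E1 : E 1 by split; rewrite // /tl rmorph1 mul1r.
have hsE : has_sup E by split; [exists 1 | exists (nrm x / normc l) => t /E_ub].
set s := sup E; have s_ge1 : 1 <= s by exact: sup_upper_bound hsE _ E1.
have [us|ns] := boolP (x - (tl s)%:A \is a GRing.unit).
  pose d := ((nrm (x - (tl s)%:A)^-1 + 1) * normc l)^-1.
  have d_gt0 : 0 < d by rewrite invr_gt0 mulr_gt0 // ltr_pwDr ?nrm_ge0.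
  have [t Et st] := sup_adherent d_gt0 hsE; case: (Et) => t_ge1 /negP[].
  have ts : t <= s by exact: sup_upper_bound hsE _ Et.
  have [r tr] := tl_rinv t t_ge1; apply: (unit_subA_near tr us).
  have hd : nrm (x - (tl s)%:A)^-1 * (d * normc l) + d * normc l = 1.
    by rewrite /d; field; rewrite !gt_eqF // ltr_pwDr ?nrm_ge0.
  have st_nl : (s - t) * normc l < d * normc l by rewrite -/s in st; rewrite ltr_pM2r //; lra.
  rewrite normc_tl distrC ger0_norm ?subr_ge0 //.
  have := nrm_ge0 (x - (tl s)%:A)^-1; have : 0 < d * normc l by rewrite mulr_gt0.
  nra.
have [rho srho] := tl_rinv s s_ge1.
pose d := (4 * (nrm rho + 1) * normc l)^-1.
have d_gt0 : 0 < d by rewrite invr_gt0 !mulr_gt0 // ltr_pwDr ?nrm_ge0.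
have ut : x - (tl (s + d))%:A \is a GRing.unit.
  apply/negPn/negP => nt; have sd_ge1 : 1 <= s + d by lra.
  by have := sup_upper_bound hsE (conj sd_ge1 nt); rewrite -/s; lra.
move/negP: ns; apply; apply: (unit_subA_near_bound srho ut).
rewrite normc_tl opprD addrA subrr add0r normrN ger0_norm ?ltW //.
have hd : 4 * (nrm rho * (d * normc l)) + 4 * (d * normc l) = 1.
  by rewrite /d; field; rewrite !gt_eqF // ltr_pwDr ?nrm_ge0.
have : 0 < d * normc l by rewrite mulr_gt0.
lra.
Qed.

Section Resolvent.
Variable x : B.

Lemma resolvent_sub l m : x - l%:A \is a GRing.unit -> x - m%:A \is a GRing.unit ->
  (x - l%:A)^-1 - (x - m%:A)^-1 = (l - m) *: ((x - l%:A)^-1 * (x - m%:A)^-1).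
Proof.
move=> ul um; have lm : (x - m%:A) - (x - l%:A) = (l - m)%:A.
  by rewrite opprB addrC addrA subrK scalerBl.
have -> : (l - m) *: ((x - l%:A)^-1 * (x - m%:A)^-1)
    = (x - l%:A)^-1 * (l - m)%:A * (x - m%:A)^-1 by rewrite mulr_algr scalerAl.
by rewrite -lm mulrBr mulrBl mulVr // mulrK // mul1r.
Qed.

Lemma nrm_resolvent_lipschitz l m :
  x - l%:A \is a GRing.unit -> x - m%:A \is a GRing.unit ->
  `|nrm (x - l%:A)^-1 - nrm (x - m%:A)^-1|
    <= normc (l - m) * nrm (x - l%:A)^-1 * nrm (x - m%:A)^-1.
Proof.
move=> ul um; apply: le_trans (nrm_dist _ _) _.
by rewrite resolvent_sub // nrmZ -mulrA (ler_wpM2l (normc_ge0 _)) ?nrmM.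
Qed.

Lemma nrm_resolvent_le2 l m :
  x - l%:A \is a GRing.unit -> x - m%:A \is a GRing.unit ->
  normc (l - m) * nrm (x - m%:A)^-1 <= 1 / 2 ->
  nrm (x - l%:A)^-1 <= 2 * nrm (x - m%:A)^-1.
Proof.
move=> ul um small; have := nrm_resolvent_lipschitz ul um.
rewrite ler_norml => /andP[_]; have := nrm_ge0 (x - l%:A)^-1.
have := normc_ge0 (l - m); nra.
Qed.

Lemma nrm_resolvent_decay l : x - l%:A \is a GRing.unit ->
  nrm (x - l%:A)^-1 * (normc l - nrm x) <= 1.
Proof.
move/mulVr; set w := (x - l%:A)^-1 => wx; clearbody w.
have e : l *: w = w * x - 1 by rewrite -[in RHS]wx mulrBr mulr_algr opprB addrC subrK.
have : normc l * nrm w <= nrm w * nrm x + 1.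
  by rewrite -nrmZ e; apply: le_trans (nrmD _ _) _; rewrite nrmN nrm1 lerD2r nrmM.
lra.
Qed.

Lemma resolvent_root_mean n (om : R[i]) (c r : R[i]) :
  n.-primitive_root om -> x - c%:A \is a GRing.unit ->
  (forall k : 'I_n, x - (c + om ^+ k * r)%:A \is a GRing.unit) ->
  let Z := \sum_(k < n) (x - (c + om ^+ k * r)%:A)^-1 in
  Z = n%:R *: (x - c%:A)^-1 + r ^+ n *: (Z * (x - c%:A)^-1 ^+ n).
Proof.
move=> om_n uc uk Z; set w := (x - c%:A)^-1.
have [n' n_eq] : exists n', n = n'.+1.
  by case: n om_n {uk Z} => [/prim_order_gt0 | n' _]; last exists n'.
have Zk_exp (k : 'I_n) : (x - (c + om ^+ k * r)%:A)^-1 =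
    \sum_(p < n) (om ^+ k * r) ^+ p *: w ^+ p.+1
    + r ^+ n *: ((x - (c + om ^+ k * r)%:A)^-1 * w ^+ n).
  have Zk_eq : (x - (c + om ^+ k * r)%:A)^-1 =
      w + (om ^+ k * r) *: ((x - (c + om ^+ k * r)%:A)^-1 * w).
    have := resolvent_sub (uk k) uc.
    by rewrite addrAC subrr add0r => <-; rewrite [RHS]addrC subrK.
  rewrite {1}(resolvent_expansion Zk_eq n) exprMn -exprM mulnC exprM.
  by rewrite (prim_expr_order om_n) expr1n mul1r.
rewrite {1}/Z (eq_bigr _ (fun k _ => Zk_exp k)) big_split /= -/Z.
rewrite -scaler_sumr -mulr_suml; congr (_ + _).
rewrite exchange_big /=; subst n; rewrite big_ord_recl [X in _ + X]big1 => [|p _]; last first.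
  rewrite -scaler_suml (eq_bigr (fun i : 'I_n'.+1 => (om ^+ p.+1) ^+ i * r ^+ p.+1)).
    by rewrite -mulr_suml sum_prim_root_expr ?mul0r ?scale0r //= ltnS ltn_ord.
  by move=> i _; rewrite exprMn -!exprM mulnC.
rewrite addr0 (eq_bigr (fun=> w)) => [|i _]; last by rewrite expr0 scale1r expr1.
by rewrite sumr_const card_ord scaler_nat.
Qed.

End Resolvent.

(* A proof by contradiction: the hypothesis below is refuted at the end. *)
Section EntireResolvent.
Variable x : B.
Hypothesis x_res : forall l, x - l%:A \is a GRing.unit.

Let phi l := nrm (x - l%:A)^-1.

Let phi_gt0 l : 0 < phi l.
Proof. exact: nrm_inv_gt0. Qed.

Let phi_lt_far (t : R) l : 0 < t -> nrm x + t^-1 < normc l -> phi l < t.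
Proof.
move=> t_gt0 far; have := nrm_resolvent_decay (x_res l); rewrite -/(phi l).
have tt : t * t^-1 = 1 by rewrite mulfV ?gt_eqF.
have := invr_gt0 t; rewrite t_gt0 => /= t'_gt0; have := phi_gt0 l; nra.
Qed.

Let phi_cont : continuous (fun p : R * R => phi (p.1 +i* p.2)).
Proof.
move=> p; apply/cvgrPdist_lt => e e_gt0; set m := p.1 +i* p.2.
have pm := phi_gt0 m.
pose d := Num.min (1 / (4 * phi m)) (e / (8 * phi m ^+ 2)).
have d_gt0 : 0 < d by rewrite lt_min !divr_gt0 // ?mulr_gt0 ?exprn_gt0.
have d_le1 : d * (4 * phi m) <= 1.
  by rewrite -ler_pdivlMr ?mulr_gt0 // ge_min lexx.
have d_le2 : d * (8 * phi m ^+ 2) <= e.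
  by rewrite -ler_pdivlMr ?mulr_gt0 ?exprn_gt0 // ge_min lexx orbT.
apply: filterS (nbhsx_ballx p d d_gt0) => q [q1 q2].
rewrite -ball_normE /= in q1 q2; set l := q.1 +i* q.2.
have lm : normc (l - m) <= 2 * d.
  by apply: le_trans (normc_le_Re_Im _) _; rewrite /= (distrC q.1) (distrC q.2); lra.
have phil : phi l <= 2 * phi m.
  apply: nrm_resolvent_le2 (x_res l) (x_res m) _; rewrite -/(phi m).
  by have := normc_ge0 (l - m); nra.
rewrite distrC; apply: le_lt_trans (nrm_resolvent_lipschitz (x_res l) (x_res m)) _.
have : normc (l - m) * phi l <= (2 * d) * (2 * phi m).
  by apply: ler_pM => //; [exact: normc_ge0 | exact: nrm_ge0].
rewrite -/(phi l) -/(phi m) expr2 in d_le2 *; have := normc_ge0 (l - m); nra.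
Qed.

Let phi_max : exists c, forall l, phi l <= phi c.
Proof.
pose K := nrm x + (phi 0)^-1.
have K_ge0 : 0 <= K by rewrite addr_ge0 ?nrm_ge0 // invr_ge0 ltW.
pose S := (`[-K, K] `*` `[-K, K])%classic.
have inS (u v : R) : `|u| <= K -> `|v| <= K -> (u, v) \in S.
  by move=> uK vK; rewrite inE; split; rewrite /= in_itv /= -ler_norml.
have S0 : (S !=set0)%classic by exists (0, 0); apply/set_mem/inS; rewrite normr0.
have cS : compact S by apply: compact_setX; exact: segment_compact.
have [c0 _ c0max] := compact_EVT_max S0 cS (continuous_subspaceT phi_cont).
exists (c0.1 +i* c0.2) => l.
have [/andP[Kre Kim]|] := boolP ((`|complex.Re l| <= K) && (`|complex.Im l| <= K)).
  by have := c0max _ (inS _ _ Kre Kim); case: (l).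
rewrite negb_and -!ltNge => far; apply/ltW/(lt_le_trans (phi_lt_far (phi_gt0 0) _)).
  by case/orP: far => far; apply: lt_le_trans far _; [exact: normc_ge_Re | exact: normc_ge_Im].
by have := c0max (0, 0) (inS _ _ _ _); rewrite normr0; apply.
Qed.

(* The radius [1 / (2 M)] makes [(r M) ^ n = 2 ^ -n] negligible against [n]. *)
Let phi_mean_bound c M : (forall l, phi l <= M) -> phi c = M -> forall n,
  (M - phi (c + ((2 * M)^-1)%:C)) * 2 ^+ n.+1 <= n.+1%:R * M.
Proof.
move=> cmax cM n; set r := (2 * M)^-1; set q := phi (c + r%:C).
have M_gt0 : 0 < M by rewrite -cM.
have r_gt0 : 0 < r by rewrite invr_gt0 mulr_gt0.
have [om om_n] := @prim_root_exists R[i] n.+1 isT.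
have := resolvent_root_mean om_n (x_res c) (fun k => x_res _) (r := r%:C).
set Z := \sum_(k < n.+1) _ => ZE.
have wE : n.+1%:R *: (x - c%:A)^-1 = Z - r%:C ^+ n.+1 *: (Z * (x - c%:A)^-1 ^+ n.+1).
  by apply/eqP; rewrite eq_sym subr_eq -ZE.
have Z_le : nrm Z <= q + n%:R * M.
  apply: le_trans (nrm_sum _ _ _) _; rewrite big_ord_recl expr0 mul1r lerD2l.
  apply: le_trans (ler_sum _ (fun i _ => cmax _)) _.
  by rewrite sumr_const card_ord mulr_natl.
have rho2 : (r * M) ^+ n.+1 * 2 ^+ n.+1 = 1.
  have rM2 : r * M * 2 = 1 by rewrite /r; field; rewrite gt_eqF.
  by rewrite -exprMn rM2 expr1n.
have nM_le : n.+1%:R * M <= nrm Z + (r * M) ^+ n.+1 * nrm Z.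
  rewrite -{1}cM -(normc_natr R n.+1) -nrmZ wE; apply: le_trans (nrmD _ _) _.
  rewrite nrmN lerD2l nrmZ -rmorphXn normc_real ger0_norm; last by rewrite exprn_ge0 ?ltW.
  rewrite exprMn -mulrA ler_pM2l ?exprn_gt0 // [_ * nrm Z]mulrC -cM.
  by apply: le_trans (nrmM _ _) _; exact: (ler_wpM2l (nrm_ge0 _)) (nrmX _ _).
have q_le : q <= M := cmax _.
have n1 : n.+1%:R * M = n%:R * M + M :> R by rewrite -natr1 mulrDl mul1r.
have rhoZ : (r * M) ^+ n.+1 * nrm Z <= (r * M) ^+ n.+1 * (n.+1%:R * M).
  rewrite ler_pM2l ?exprn_gt0 ?mulr_gt0 // n1; apply: le_trans Z_le _.
  by rewrite addrC lerD2l.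
have : M - q <= (r * M) ^+ n.+1 * (n.+1%:R * M) by rewrite n1 in nM_le; lra.
by move/(ler_wpM2r (exprn_ge0 n.+1 (ler0n R 2))); rewrite mulrAC rho2 mul1r.
Qed.

Let phi_shift c M : (forall l, phi l <= M) -> phi c = M ->
  phi (c + ((2 * M)^-1)%:C) = M.
Proof.
move=> cmax cM; apply/eqP; rewrite eq_le cmax /= leNgt; apply/negP => q_lt.
set q := phi _ in q_lt *.
pose n := maxn 4 (Num.Def.trunc (M / (M - q))).+1.
have n_ge4 : (4 <= n)%N by rewrite leq_maxl.
have := phi_mean_bound cmax cM n.-1; rewrite prednK ?(leq_trans _ n_ge4) // -/q => bound.
have n2 : (n%:R : R) ^+ 2 <= 2 ^+ n.
  by rewrite -natrX -(natrX R 2 n) ler_nat leq_sqrn_exp2.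
have : M / (M - q) < n%:R.
  by apply: lt_le_trans (truncnS_gt _) _; rewrite ler_nat leq_maxr.
rewrite ltr_pdivrMr ?subr_gt0 // => Mn.
have n_gt0 : (0 : R) < n%:R by rewrite ltr0n (leq_trans _ n_ge4).
have h1 : (M - q) * n%:R ^+ 2 <= n%:R * M.
  by apply: le_trans bound; rewrite ler_wpM2l // subr_ge0 ltW.
have h2 : n%:R * M < n%:R * (n%:R * (M - q)) by rewrite ltr_pM2l.
by have := le_lt_trans h1 h2; rewrite mulrA -expr2 mulrC ltxx.
Qed.

Lemma resolvent_not_entire : False.
Proof.
have [c cmax] := phi_max; set M := phi c in cmax; set r := (2 * M)^-1.
have M_gt0 : 0 < M := phi_gt0 c.
have r_gt0 : 0 < r by rewrite invr_gt0 mulr_gt0.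
have chain j : phi (c + (j%:R * r)%:C) = M.
  elim: j => [|j IHj]; first by rewrite mul0r rmorph0 addr0.
  by rewrite -natr1 mulrDl mul1r rmorphD addrA; exact: phi_shift cmax IHj.
pose j := (Num.Def.trunc ((nrm x + M^-1 + normc c) / r)).+1.
have j_big : nrm x + M^-1 + normc c < j%:R * r by rewrite -ltr_pdivrMr // truncnS_gt.
have far : nrm x + M^-1 < normc (c + (j%:R * r)%:C).
  have := le_normcD (c + (j%:R * r)%:C) (- c); rewrite addrC addKr normcN normc_real.
  by rewrite ger0_norm ?(mulr_ge0 (ler0n _ _) (ltW r_gt0)); lra.
by have := phi_lt_far M_gt0 far; rewrite chain ltxx.
Qed.

End EntireResolvent.

Lemma spectrum_nonempty x : exists l, x - l%:A \isn't a GRing.unit.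
Proof.
apply: contrapT => no_spec; apply: (@resolvent_not_entire x) => l.
by apply/negPn/negP => l_spec; apply: no_spec; exists l.
Qed.

Lemma spectrum_sub0_add a b k :
  (forall al : 'I_k -> B, (forall i, al i = a \/ al i = b) ->
     a * b * \prod_(i < k) al i = 0) ->
  spectrum_sub0 a /\ spectrum_sub0 b <-> spectrum_sub0 (a + b).
Proof.
move=> ab0; split=> [[sa sb] | sab]; first exact: spectrum_sub0D ab0 sa sb.
have uM l : l != 0 -> (a - l%:A) * (b - l%:A) \is a GRing.unit.
  by move=> l0; apply: (mulr_subA_unit ab0 l0 (sab l l0)).
have sa : spectrum_sub0 a.
  apply: spectrum_sub0_of_rinv => l l0.
  by exists ((b - l%:A) * ((a - l%:A) * (b - l%:A))^-1); rewrite mulrA divrr ?uM.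
by split=> // l l0; rewrite -(unitrMr _ (sa l l0)) uM.
Qed.

End NormedAlgebra.

Section BanachAlgebraRing.
Variables (R : realType) (A : completeNormedModType R[i]).
Variables (mul : A -> A -> A) (one : A) (hA : banach_algebra mul one).

(* [A] seen as a ring with product [mul] and unit [one]; taking [hA] as an
   argument lets the instances below outlive the section. *)
Definition balg of banach_algebra mul one : Type := A.

Lemma ba_one_neq0 : one != 0.
Proof.
apply/eqP => one0; have := ba_norm1 hA.
by rewrite one0 normr0 => /eqP; rewrite eq_sym oner_eq0.
Qed.

HB.instance Definition _ := GRing.Lmodule.on (balg hA).
HB.instance Definition _ := GRing.Zmodule_isNzRing.Build (balg hA)
  (ba_mulA hA) (ba_mul1l hA) (ba_mul1r hA) (ba_mulDl hA) (ba_mulDr hA) ba_one_neq0.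
HB.instance Definition _ := GRing.LSemiModule_isLSemiAlgebra.Build R[i] (balg hA)
  (fun l x y => esym (ba_mulZl hA l x y)).
HB.instance Definition _ := GRing.Lalgebra_isAlgebra.Build R[i] (balg hA)
  (fun l x y => esym (ba_mulZr hA l x y)).

Definition ba_unit : pred (balg hA) := fun x => `[< invertible mul one x >].

Definition ba_inv (x : balg hA) : balg hA :=
  if pselect (invertible mul one x) is left ix then projT1 (cid ix) else x.

Lemma ba_mulVr : {in ba_unit, left_inverse 1 ba_inv *%R}.
Proof.
move=> x /asboolP ix; rewrite /ba_inv; case: pselect => [{}ix|//].
by case: (cid ix) => y [].
Qed.

Lemma ba_divrr : {in ba_unit, right_inverse 1 ba_inv *%R}.
Proof.
move=> x /asboolP ix; rewrite /ba_inv; case: pselect => [{}ix|//].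
by case: (cid ix) => y [].
Qed.

Lemma ba_unitrP (x y : balg hA) : y * x = 1 /\ x * y = 1 -> ba_unit x.
Proof. by move=> [yx xy]; apply/asboolP; exists y. Qed.

Lemma ba_invr_out : {in [predC ba_unit], ba_inv =1 id}.
Proof.
move=> x /negP nx; rewrite /ba_inv; case: pselect => // ix.
by case: nx; apply/asboolP.
Qed.

HB.instance Definition _ := GRing.NzRing_hasMulInverse.Build (balg hA)
  ba_mulVr ba_divrr ba_unitrP ba_invr_out.

Lemma invertibleP (x : balg hA) : reflect (invertible mul one x) (x \is a GRing.unit).
Proof. by apply: (iffP unitrP) => -[y [? ?]]; exists y. Qed.

Definition bnorm (x : A) : R := complex.Re `|x|.

Lemma bnormE x : `|x| = (bnorm x)%:C.
Proof. exact/esym/RRe_real/ger0_real. Qed.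

Lemma bnorm_eq0 x : bnorm x = 0 -> x = 0.
Proof. by move=> x0; apply/normr0_eq0; rewrite bnormE x0. Qed.

Lemma bnormD x y : bnorm (x + y) <= bnorm x + bnorm y.
Proof. by have := ler_normD x y; rewrite !bnormE -rmorphD lecR. Qed.

Lemma bnormZ (l : R[i]) x : bnorm (l *: x) = normc l * bnorm x.
Proof. by apply: complexI; rewrite -bnormE normrZ bnormE normcE rmorphM. Qed.

Lemma bnormM x y : bnorm (mul x y) <= bnorm x * bnorm y.
Proof. by have := ba_normM hA x y; rewrite !bnormE -rmorphM lecR. Qed.

Lemma bnorm1 : bnorm one = 1.
Proof. by rewrite /bnorm (ba_norm1 hA). Qed.

Lemma qnilE (x : A) : qnil mul one x = spectrum_sub0 (x : balg hA).
Proof.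
rewrite propeqE; split => [qx l l0 | sx].
  apply/invertibleP; apply: contrapT => nx.
  have : [set 0]%classic l by rewrite -qx.
  by move=> /= l0'; rewrite l0' eqxx in l0.
apply/seteqP; split => l /= nl.
  by have [//|l0] := eqVneq l 0; case: nl; apply/invertibleP/sx.
have [m /negP nm] :=
  spectrum_nonempty (B := balg hA) bnorm_eq0 bnormD bnormZ bnormM bnorm1 (x : balg hA).
have [m0|m0] := eqVneq m 0; last by case: nm; exact: sx.
by rewrite nl => ix; apply: nm; rewrite m0; apply/invertibleP.
Qed.

End BanachAlgebraRing.

Theorem lemma3p1 (R : realType) (A : completeNormedModType (R[i]))
  (mul : A -> A -> A) (one : A) (hA : banach_algebra mul one)
  (a b : A) (k : nat) (hk : (0 < k)%N)
  (hab : forall al : 'I_k -> A, (forall i, al i = a \/ al i = b) ->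
           mul (mul a b) (\big[mul/one]_(i < k) al i) = 0) :
  (qnil mul one a /\ qnil mul one b) <-> qnil mul one (a + b).
Proof.
have ab0 : forall al : 'I_k -> balg hA, (forall i, al i = a \/ al i = b) ->
    (a : balg hA) * b * \prod_(i < k) al i = 0 := hab.
rewrite !(qnilE hA).
exact: (spectrum_sub0_add (B := balg hA) (@bnorm_eq0 R A) (@bnormD R A) (@bnormZ R A)
  (bnormM hA) (bnorm1 hA) ab0).
Qed.
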